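(* Let $\{R_i\}_i$ be an arbitrary family of module-avoidance rings and $R=\prod_i R_i$. Then $R$ is a module-avoidance ring if and only if $R/I$ is a module-avoidance ring, where $I=\bigoplus_i R_i\subseteq R$.
   Context: All rings are commutative with $1\neq 0$. An $R$-module $M$ has avoidance if whenever $M=\bigcup_{k=1}^n M_k$ for finitely many $R$-submodules $M_k$, then $M=M_k$ for some $k$. A ring $R$ is a module-avoidance ring if every $R$-module has avoidance. *)

From HB Require Import structures.
From mathcomp Require Import all_boot all_algebra.
From mathcomp Require Import boolp.
From mathcomp Require Import generic_quotient ring_quotient.

Set Implicit Arguments.
Unset Strict Implicit.
Unset Printing Implicit Defensive.

Import GRing.Theory.
Local Open Scope ring_scope.
Local Open Scope quotient_scope.

(* Rings are commutative; we use comPzRingType (the zero ring allowed)  *)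
(* so that R/I makes sense even when I = R (finite families).           *)

Definition is_submodule (R : pzRingType) (M : lmodType R) (S : M -> Prop) :=
  S 0 /\ forall (a : R) (u v : M), S u -> S v -> S (a *: u + v).

Definition has_avoidance (R : pzRingType) (M : lmodType R) : Prop :=
  forall (n : nat) (Mk : 'I_n -> M -> Prop),
    (forall k, is_submodule (Mk k)) ->
    (forall x : M, exists k, Mk k x) ->
    exists k, forall x : M, Mk k x.

Definition module_avoidance_ring (R : comPzRingType) : Prop :=
  forall M : lmodType R, has_avoidance M.

Section DProd.
Variables (I : Type) (R : I -> comPzRingType).

Definition dprod := forall i, R i.

HB.instance Definition _ := Choice.on dprod.

Definition dprod_zero : dprod := fun i => 0.
Definition dprod_add (x y : dprod) : dprod := fun i => x i + y i.
Definition dprod_opp (x : dprod) : dprod := fun i => - x i.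
Definition dprod_one : dprod := fun i => 1.
Definition dprod_mul (x y : dprod) : dprod := fun i => x i * y i.

Lemma dprod_addA : associative dprod_add.
Proof. by move=> x y z; apply: functional_extensionality_dep => i; rewrite /dprod_add addrA. Qed.
Lemma dprod_addC : commutative dprod_add.
Proof. by move=> x y; apply: functional_extensionality_dep => i; rewrite /dprod_add addrC. Qed.
Lemma dprod_add0 : left_id dprod_zero dprod_add.
Proof. by move=> x; apply: functional_extensionality_dep => i; rewrite /dprod_add add0r. Qed.
Lemma dprod_addN : left_inverse dprod_zero dprod_opp dprod_add.
Proof. by move=> x; apply: functional_extensionality_dep => i; rewrite /dprod_add addNr. Qed.

HB.instance Definition _ :=
  GRing.isZmodule.Build dprod dprod_addA dprod_addC dprod_add0 dprod_addN.

Lemma dprod_mulA : associative dprod_mul.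
Proof. by move=> x y z; apply: functional_extensionality_dep => i; rewrite /dprod_mul mulrA. Qed.
Lemma dprod_mulC : commutative dprod_mul.
Proof. by move=> x y; apply: functional_extensionality_dep => i; rewrite /dprod_mul mulrC. Qed.
Lemma dprod_mul1 : left_id dprod_one dprod_mul.
Proof. by move=> x; apply: functional_extensionality_dep => i; rewrite /dprod_mul mul1r. Qed.
Lemma dprod_mulDl : left_distributive dprod_mul +%R.
Proof. by move=> x y z; apply: functional_extensionality_dep => i; rewrite /dprod_mul /= /dprod_add mulrDl. Qed.

HB.instance Definition _ :=
  GRing.Zmodule_isComPzRing.Build dprod dprod_mulA dprod_mulC dprod_mul1 dprod_mulDl.

(* the direct sum  (+)_i R_i  inside  prod_i R_i : finitely supported elements *)
Definition dsum_prop (x : dprod) : Prop :=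
  exists (n : nat) (f : 'I_n -> I), forall i, (forall k, f k <> i) -> x i = 0.
Definition dsum : {pred dprod} := fun x => `[< dsum_prop x >].

Lemma dsum0 : 0 \in dsum.
Proof.
apply/asboolP; exists 0%N, (fun k : 'I_0 => match k with Ordinal _ h => False_rect I (notF h) end) => i _.
by [].
Qed.

Lemma dsumB : {in dsum &, forall x y, x - y \in dsum}.
Proof.
move=> x y /asboolP[n [f hf]] /asboolP[m [g hg]]; apply/asboolP.
exists (n + m)%N, (fun k => match split k with inl a => f a | inr b => g b end) => i hi.
have hs' : forall k, f k <> i.
  move=> k e; apply: (hi (lshift m k)).
  by have -> : split (lshift m k) = inl k by exact: (unsplitK (inl _ k)).
have ht' : forall k, g k <> i.
  move=> k e; apply: (hi (rshift n k)).
  by have -> : split (rshift n k) = inr k by exact: (unsplitK (inr _ k)).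
have -> : (x - y) i = x i - y i by [].
by rewrite (hf i hs') (hg i ht') subrr.
Qed.

Lemma dsumM (a x : dprod) : x \in dsum -> a * x \in dsum.
Proof.
move=> /asboolP[n [f hf]]; apply/asboolP; exists n, f => i hi.
have -> : (a * x) i = a i * x i by [].
by rewrite hf // mulr0.
Qed.

End DProd.

(* Quotient of a commutative ring by an ideal (the ideal may be the     *)
(* whole ring, in which case the quotient is the zero ring).            *)
Record ideal (R : comPzRingType) := Ideal {
  ideal_pred :> {pred R};
  ideal0 : 0 \in ideal_pred;
  idealB : {in ideal_pred &, forall x y, x - y \in ideal_pred};
  idealM : forall a x, x \in ideal_pred -> a * x \in ideal_pred }.

Section RQuot.
Variables (R : comPzRingType) (J : ideal R).

Definition ideal_zpred : {pred R} := fun x => x \in ideal_pred J.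
Lemma ideal_zpred_closed : zmod_closed ideal_zpred.
Proof. by split; [exact: ideal0 | exact: idealB]. Qed.
HB.instance Definition _ := GRing.isZmodClosed.Build R ideal_zpred
  ideal_zpred_closed.

Definition rquot := Quotient.quot ideal_zpred.
HB.instance Definition _ := GRing.Zmodule.on rquot.

Local Notation piq := (\pi_rquot).

Definition rq_one : rquot := lift_cst rquot 1.
Definition rq_mul := lift_op2 rquot *%R.
Canonical rq_pi_one_morph := PiConst rq_one.

Lemma zpredM a x : x \in ideal_zpred -> a * x \in ideal_zpred.
Proof. exact: idealM. Qed.

Lemma rq_pi_mul : {morph piq : x y / x * y >-> rq_mul x y}.
Proof.
move=> x y; unlock rq_mul; apply/eqP; rewrite piE Quotient.equivE.
rewrite -[_ * _](addrNK (x * repr (piq y))) -mulrBr.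
rewrite -addrA -mulrBl rpredD //.
  by apply: zpredM; rewrite Quotient.idealrBE reprK.
by rewrite mulrC; apply: zpredM; rewrite Quotient.idealrBE reprK.
Qed.
Canonical rq_pi_mul_morph := PiMorph2 rq_pi_mul.

Lemma rq_mulA : associative rq_mul.
Proof. by move=> x y z; rewrite -[x]reprK -[y]reprK -[z]reprK !piE mulrA. Qed.
Lemma rq_mulC : commutative rq_mul.
Proof. by move=> x y; rewrite -[x]reprK -[y]reprK !piE mulrC. Qed.
Lemma rq_mul1 : left_id rq_one rq_mul.
Proof. by move=> x; rewrite -[x]reprK !piE mul1r. Qed.
Lemma rq_mulDl : left_distributive rq_mul +%R.
Proof.
move=> x y z; rewrite -[x]reprK -[y]reprK -[z]reprK.
by rewrite !piE mulrDl.
Qed.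

HB.instance Definition _ :=
  GRing.Zmodule_isComPzRing.Build rquot rq_mulA rq_mulC rq_mul1 rq_mulDl.

End RQuot.

Definition dsum_ideal (I : Type) (R : I -> comPzRingType) : ideal (dprod R) :=
  @Ideal (dprod R) (@dsum I R) (@dsum0 I R) (@dsumB I R) (@dsumM I R).

(* Restriction of scalars along [R -> R/I] gives the forward direction.
   Conversely, let an [R]-module [M] be covered by submodules [M_1, ..., M_n].
   Each component [e_j M] is an [R_j]-module, so it contains a point lying only
   in those [M_k] that contain all of [e_j M]; call that set of indices [K_j].
   The finitely many fibers [T] of [j |-> K_j] give orthogonal idempotents
   [e_T] summing to [1].  On a fiber, add to such a component point a lift of an
   avoidance point of the [R/I]-module [M / I M]: any [M_k] containing the sum
   contains [e_i M] for every [i] in the fiber, hence [I e_T M], hence [e_T M].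
   Whichever [M_k] contains the sum of these points over all fibers is [M]. *)

From HB Require Import structures.
From mathcomp Require Import all_boot all_algebra.
From mathcomp Require Import boolp generic_quotient ring_quotient.

Set Implicit Arguments.
Unset Strict Implicit.
Unset Printing Implicit Defensive.

Import GRing.Theory.
Local Open Scope ring_scope.
Local Open Scope quotient_scope.

Section Submodules.
Variables (A : pzRingType) (M : lmodType A) (S : M -> Prop).
Hypothesis S_submod : is_submodule S.

Lemma is_submodule0 : S 0.
Proof. by case: S_submod. Qed.

Lemma is_submoduleZ a u : S u -> S (a *: u).
Proof. by case: S_submod => S0 Slin Su; rewrite -[_ *: _]addr0; apply: Slin. Qed.

Lemma is_submoduleD u v : S u -> S v -> S (u + v).
Proof. by case: S_submod => _ Slin Su Sv; rewrite -[u]scale1r; apply: Slin. Qed.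

Lemma is_submoduleB u v : S u -> S v -> S (u - v).
Proof.
by move=> Su Sv; rewrite -scaleN1r; apply: is_submoduleD => //; apply: is_submoduleZ.
Qed.

Lemma is_submodule_sum (F : finType) (x : F -> M) :
  (forall t, S (x t)) -> S (\sum_t x t).
Proof.
by move=> Sx; apply: big_ind => //; [exact: is_submodule0 | exact: is_submoduleD].
Qed.

End Submodules.

Definition addsub (A : pzRingType) (M : lmodType A) (S : M -> Prop) (N : {pred M})
  (x : M) : Prop := exists2 m, S m & x - m \in N.

Lemma is_submodule_addsub (A : pzRingType) (M : lmodType A) (S : M -> Prop)
    (N : zmodClosed M) :
  (forall a x, x \in N -> a *: x \in N) ->
  is_submodule S -> is_submodule (addsub S N).
Proof.
move=> N_scale S_submod; split.
  by exists 0; [exact: is_submodule0 | rewrite subrr rpred0].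
move=> a u v [mu Smu Nu] [mv Smv Nv]; exists (a *: mu + mv).
  by case: S_submod => _; apply.
by rewrite opprD addrACA -scalerBr rpredD // N_scale.
Qed.

Lemma is_submodule_scale_preim (A : comPzRingType) (M : lmodType A)
    (S : M -> Prop) e :
  is_submodule S -> is_submodule (fun x => S (e *: x)).
Proof.
case=> S0 Slin; split; first by rewrite scaler0.
by move=> a u v Su Sv; rewrite scalerDr !scalerA mulrC -scalerA; apply: Slin.
Qed.

(* If no single [N_k] were the whole module, the proper [N_k] together with
   the zero submodules in place of the others would still cover [N]. *)
Lemma avoidance_point (A : pzRingType) (N : lmodType A) : has_avoidance N ->
  forall n (Nk : 'I_n -> N -> Prop), (forall k, is_submodule (Nk k)) ->
  exists q, forall k, Nk k q -> forall y, Nk k y.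
Proof.
move=> N_av n Nk Nk_submod; apply: contrapT => no_point.
pose Nk' k x := Nk k x /\ (~ (forall y, Nk k y) \/ x = 0).
have Nk'_submod k : is_submodule (Nk' k).
  split; first by split; [exact: is_submodule0 | right].
  move=> a u v [Nu u_gen] [Nv v_gen]; split; first by case: (Nk_submod k) => _; apply.
  case: u_gen => [|->]; first by left.
  by case: v_gen => [|->]; [left | right; rewrite scaler0 addr0].
have [k Nk'_full] : exists k, forall x, Nk' k x.
  apply: N_av => // x; apply: contrapT => x_out; apply: no_point.
  exists x => k Nkx; apply: contrapT => Nk_proper; apply: x_out.
  by exists k; split; [| left].
have N0 (y : N) : y = 0.
  by have [_ [[] z|//]] := Nk'_full y; case: (Nk'_full z).
by apply: no_point; exists 0 => k' _ y; rewrite (N0 y); exact: is_submodule0.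
Qed.

Section RestrictScalars.
Variables (A B : pzRingType) (f : {rmorphism A -> B}) (M : lmodType B).

Definition restrict : Type := M.
HB.instance Definition _ := GRing.Zmodule.on restrict.

Definition restrict_scale (a : A) (m : restrict) : restrict := f a *: (m : M).

Lemma restrict_scalerA a b v :
  restrict_scale a (restrict_scale b v) = restrict_scale (a * b) v.
Proof. by rewrite /restrict_scale scalerA rmorphM. Qed.
Lemma restrict_scale1r : left_id 1 restrict_scale.
Proof. by move=> v; rewrite /restrict_scale rmorph1 scale1r. Qed.
Lemma restrict_scalerDr : right_distributive restrict_scale +%R.
Proof. by move=> a u v; rewrite /restrict_scale scalerDr. Qed.
Lemma restrict_scalerDl v : {morph restrict_scale^~ v : a b / a + b}.
Proof. by move=> a b; rewrite /restrict_scale rmorphD scalerDl. Qed.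

HB.instance Definition _ := GRing.Zmodule_isLmodule.Build A restrict
  restrict_scalerA restrict_scale1r restrict_scalerDr restrict_scalerDl.

Lemma has_avoidance_restrict : has_avoidance restrict -> has_avoidance M.
Proof.
move=> M_av n Mk Mk_submod; apply: M_av => k.
by have [M0 Mlin] := Mk_submod k; split=> // a; apply: Mlin.
Qed.

End RestrictScalars.

Lemma module_avoidance_ring_rmorph (A B : comPzRingType) (f : {rmorphism A -> B}) :
  module_avoidance_ring A -> module_avoidance_ring B.
Proof. by move=> A_av M; apply: (@has_avoidance_restrict _ _ f); apply: A_av. Qed.

Section QuotientModule.
Variables (T : comPzRingType) (J : ideal T).

Definition rquot_pi : T -> rquot J := \pi.

Lemma rquot_pi_is_zmod_morphism : zmod_morphism rquot_pi.
Proof. by move=> x y; rewrite /rquot_pi !piE. Qed.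
Lemma rquot_pi_is_monoid_morphism : monoid_morphism rquot_pi.
Proof. by split=> [|x y]; rewrite /rquot_pi ?rq_pi_mul // piE. Qed.

HB.instance Definition _ := GRing.isZmodMorphism.Build T (rquot J) rquot_pi
  rquot_pi_is_zmod_morphism.
HB.instance Definition _ := GRing.isMonoidMorphism.Build T (rquot J) rquot_pi
  rquot_pi_is_monoid_morphism.

Lemma rquot_reprB (a : T) : repr (rquot_pi a) - a \in J.
Proof.
have := (@Quotient.idealrBE _ (ideal_zpred J) (repr (rquot_pi a)) a).
by rewrite /rquot_pi reprK eqxx.
Qed.

Variables (M : lmodType T) (N : zmodClosed M).
Hypothesis N_scale : forall a x, x \in N -> a *: x \in N.
Hypothesis JM_sub : forall r x, r \in J -> r *: x \in N.

Definition quotmod : Type := Quotient.quot N.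
HB.instance Definition _ := GRing.Zmodule.on quotmod.

Local Notation piN := (\pi_quotmod).

Lemma quotmod_reprB (x : M) : repr (piN x) - x \in N.
Proof. by rewrite Quotient.idealrBE reprK. Qed.

Lemma quotmod_eq (x y : M) : x - y \in N -> piN x = piN y.
Proof. by rewrite Quotient.idealrBE => /eqP. Qed.

Definition quotmod_scale (a : rquot J) (x : quotmod) : quotmod :=
  piN (repr a *: repr x).

Lemma quotmod_scale_pi a x : quotmod_scale (rquot_pi a) (piN x) = piN (a *: x).
Proof.
apply: quotmod_eq; set ra := repr _; set rx := repr _.
have -> : ra *: rx - a *: x = ra *: (rx - x) + (ra - a) *: x.
  by rewrite scalerBr scalerBl addrA addrNK.
apply: rpredD; first by apply: N_scale; exact: quotmod_reprB.
by apply: JM_sub; exact: rquot_reprB.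
Qed.

Lemma quotmod_scalerA a b v :
  quotmod_scale a (quotmod_scale b v) = quotmod_scale (a * b) v.
Proof.
elim/(@quotW _ (rquot J)): a => a; elim/(@quotW _ (rquot J)): b => b.
elim/(@quotW _ quotmod): v => v.
by rewrite -[\pi a]/(rquot_pi a) -[\pi b]/(rquot_pi b) !quotmod_scale_pi -rmorphM
  quotmod_scale_pi scalerA.
Qed.

Lemma quotmod_scale1r : left_id 1 quotmod_scale.
Proof.
by elim/(@quotW _ quotmod) => v; rewrite -(rmorph1 rquot_pi) quotmod_scale_pi scale1r.
Qed.

Lemma quotmod_scalerDr : right_distributive quotmod_scale +%R.
Proof.
elim/(@quotW _ (rquot J)) => a; elim/(@quotW _ quotmod) => u.
elim/(@quotW _ quotmod) => v; rewrite -[\pi a]/(rquot_pi a).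
by rewrite -raddfD !quotmod_scale_pi scalerDr raddfD.
Qed.

Lemma quotmod_scalerDl v : {morph quotmod_scale^~ v : a b / a + b}.
Proof.
elim/(@quotW _ (rquot J)) => a; elim/(@quotW _ (rquot J)) => b.
elim/(@quotW _ quotmod): v => v.
rewrite -[\pi a]/(rquot_pi a) -[\pi b]/(rquot_pi b).
by rewrite -raddfD !quotmod_scale_pi scalerDl raddfD.
Qed.

HB.instance Definition _ := GRing.Zmodule_isLmodule.Build (rquot J) quotmod
  quotmod_scalerA quotmod_scale1r quotmod_scalerDr quotmod_scalerDl.

Lemma avoidance_point_quotmod : module_avoidance_ring (rquot J) ->
  forall n (Sk : 'I_n -> M -> Prop), (forall k, is_submodule (Sk k)) ->
  (forall k x, x \in N -> Sk k x) ->
  exists x, forall k, Sk k x -> forall y, Sk k y.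
Proof.
move=> quot_av n Sk Sk_submod Sk_N.
have Sk_pi k x : Sk k (repr (piN x)) <-> Sk k x.
  have NSk := Sk_N k _ (quotmod_reprB x).
  split=> Skx; first by rewrite -[x](subKr (repr (piN x))); apply: is_submoduleB.
  by rewrite -[repr _](subrK x); apply: is_submoduleD.
have Sk'_submod k : is_submodule (fun z : quotmod => Sk k (repr z)).
  split; first by rewrite -(raddf0 piN) Sk_pi; exact: is_submodule0.
  elim/(@quotW _ (rquot J)) => a; elim/(@quotW _ quotmod) => u.
  elim/(@quotW _ quotmod) => v; rewrite -[\pi a]/(rquot_pi a).
  rewrite -[_ *: _]/(quotmod_scale _ _) quotmod_scale_pi -raddfD !Sk_pi.
  by case: (Sk_submod k) => _; apply.
have [z z_point] := avoidance_point (quot_av quotmod) Sk'_submod.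
exists (repr z) => k Skz y; rewrite -Sk_pi; exact: z_point.
Qed.

End QuotientModule.

Lemma avoidance_of_idempotent_points (T : comPzRingType) (F : finType)
    (e : F -> T) (M : lmodType T) n (Mk : 'I_n -> M -> Prop) :
  \sum_t e t = 1 -> (forall s t, s != t -> e s * e t = 0) ->
  (forall k, is_submodule (Mk k)) -> (forall x, exists k, Mk k x) ->
  (forall t, exists q, e t *: q = q /\ forall k, Mk k q -> forall y, Mk k (e t *: y)) ->
  exists k, forall x, Mk k x.
Proof.
move=> e_sum e_orth Mk_submod Mk_cover points.
have [q q_point] := choice points.
have [k Mk_q] := Mk_cover (\sum_t q t).
have e_q t : e t *: \sum_s q s = q t.
  rewrite scaler_sumr (bigD1 t) //= (proj1 (q_point t)) big1 ?addr0 // => s s_t.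
  by rewrite -(proj1 (q_point s)) scalerA e_orth ?scale0r // eq_sym.
exists k => x; rewrite -[x]scale1r -e_sum scaler_suml.
apply: is_submodule_sum => // t; apply: (proj2 (q_point t)).
by rewrite -e_q; apply: is_submoduleZ.
Qed.

Section ProductIdempotents.
Variables (I : Type) (R : I -> comPzRingType).
Local Notation P := (dprod R).

Lemma dprodP (x y : P) : (forall i, x i = y i) -> x = y.
Proof. exact: functional_extensionality_dep. Qed.

Lemma dprod_mulE (x y : P) i : (x * y) i = x i * y i. Proof. by []. Qed.
Lemma dprod_addE (x y : P) i : (x + y) i = x i + y i. Proof. by []. Qed.
Lemma dprod_oppE (x : P) i : (- x) i = - x i. Proof. by []. Qed.

Lemma dprod_sumE (F : finType) (x : F -> P) i : (\sum_t x t) i = \sum_t x t i.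
Proof. by elim/big_rec2: _ => // t a b _ <-. Qed.

Definition dprod_ind (C : I -> bool) : P := fun i => if C i then 1 else 0.

Definition dprod_inj j (a : R j) : P := fun i =>
  if pselect (j = i) is left e then eq_rect j R a i e else 0.

Definition dprod_idem j : P := dprod_inj (1 : R j).

Lemma dprod_inj_id j (a : R j) : dprod_inj a j = a.
Proof.
by rewrite /dprod_inj; case: pselect => [e|//]; rewrite (Prop_irrelevance e erefl).
Qed.

Lemma dprod_inj_out j (a : R j) i : j <> i -> dprod_inj a i = 0.
Proof. by rewrite /dprod_inj; case: pselect. Qed.

Lemma dprod_injM j (a b : R j) : dprod_inj (a * b) = dprod_inj a * dprod_inj b.
Proof.
apply: dprodP => i; rewrite dprod_mulE.
have [<-|ji] := pselect (j = i); first by rewrite !dprod_inj_id.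
by rewrite !dprod_inj_out // mulr0.
Qed.

Lemma dprod_injD j (a b : R j) : dprod_inj (a + b) = dprod_inj a + dprod_inj b.
Proof.
apply: dprodP => i; rewrite dprod_addE.
have [<-|ji] := pselect (j = i); first by rewrite !dprod_inj_id.
by rewrite !dprod_inj_out // addr0.
Qed.

Lemma dprod_idem_inj j (a : R j) : dprod_idem j * dprod_inj a = dprod_inj a.
Proof. by rewrite -dprod_injM mul1r. Qed.

Lemma dprod_idemK j : dprod_idem j * dprod_idem j = dprod_idem j.
Proof. exact: dprod_idem_inj. Qed.

Lemma dprod_indM C C' : dprod_ind C * dprod_ind C' = dprod_ind (fun i => C i && C' i).
Proof.
by apply: dprodP => i; rewrite dprod_mulE /dprod_ind /=; case: (C i); case: (C' i);
  rewrite ?mul1r ?mul0r.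
Qed.

Lemma dprod_ind_idem C j :
  dprod_ind C * dprod_idem j = if C j then dprod_idem j else 0.
Proof.
apply: dprodP => i; rewrite dprod_mulE /dprod_ind /=.
have [<-|ji] := pselect (j = i); first by case: (C j); rewrite ?mul1r ?mul0r.
by rewrite /dprod_idem dprod_inj_out // mulr0; case: (C j); rewrite //= dprod_inj_out.
Qed.

Section Fibers.
Variables (F : finType) (kappa : I -> F).

Definition fiber_idem t : P := dprod_ind (fun i => kappa i == t).

Lemma sum_fiber_idem : \sum_t fiber_idem t = 1.
Proof.
apply: dprodP => i; rewrite dprod_sumE (bigD1 (kappa i)) //= big1 => [|t].
  by rewrite /fiber_idem /dprod_ind eqxx addr0.
by rewrite /fiber_idem /dprod_ind eq_sym => /negbTE ->.
Qed.

Lemma fiber_idem_orth s t : s != t -> fiber_idem s * fiber_idem t = 0.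
Proof.
move=> st; rewrite dprod_indM; apply: dprodP => i; rewrite /dprod_ind /=.
by case: eqP => [->|//]; rewrite (negbTE st).
Qed.

Lemma fiber_idemK t : fiber_idem t * fiber_idem t = fiber_idem t.
Proof. by rewrite dprod_indM; congr dprod_ind; apply: funext => i; rewrite andbb. Qed.

End Fibers.
End ProductIdempotents.

Arguments dprod_ind {I R} C.
Arguments dprod_idem {I R} j.
Arguments fiber_idem {I R F} kappa t.

Section Component.
Variables (I : Type) (R : I -> comPzRingType) (M : lmodType (dprod R)) (j : I).

Definition component_pred : {pred M} := fun x => dprod_idem j *: x == x.

Lemma component_pred_zmod_closed : zmod_closed component_pred.
Proof.
split=> [|x y /eqP ejx /eqP ejy]; first by rewrite unfold_in /= scaler0.
by rewrite unfold_in /= scalerBr ejx ejy.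
Qed.
HB.instance Definition _ :=
  GRing.isZmodClosed.Build M component_pred component_pred_zmod_closed.

Definition component := {x : M | x \in component_pred}.
HB.instance Definition _ := [isSub of component for (@sval M _)].
HB.instance Definition _ := [Choice of component by <:].
HB.instance Definition _ := [SubChoice_isSubZmodule of component by <:].

Lemma component_idem_scale (x : M) : dprod_idem j *: x \in component_pred.
Proof. by rewrite unfold_in /= scalerA dprod_idemK. Qed.

Lemma component_scale_subproof (a : R j) (x : component) :
  dprod_inj a *: val x \in component_pred.
Proof. by rewrite unfold_in /= scalerA dprod_idem_inj. Qed.

Definition component_scale (a : R j) (x : component) : component :=
  exist (fun y => y \in component_pred) _ (component_scale_subproof a x).

Lemma component_scalerA a b v :
  component_scale a (component_scale b v) = component_scale (a * b) v.
Proof. by apply: val_inj; rewrite /= scalerA dprod_injM. Qed.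
Lemma component_scale1r : left_id 1 component_scale.
Proof. by move=> v; apply: val_inj; apply/eqP; exact: (valP v). Qed.
Lemma component_scalerDr : right_distributive component_scale +%R.
Proof. by move=> a u v; apply: val_inj; rewrite /= !raddfD. Qed.
Lemma component_scalerDl v : {morph component_scale^~ v : a b / a + b}.
Proof. by move=> a b; apply: val_inj; rewrite /= dprod_injD scalerDl. Qed.

HB.instance Definition _ := GRing.Zmodule_isLmodule.Build (R j) component
  component_scalerA component_scale1r component_scalerDr component_scalerDl.

Lemma component_avoidance_point : module_avoidance_ring (R j) ->
  forall n (Mk : 'I_n -> M -> Prop), (forall k, is_submodule (Mk k)) ->
  exists2 p, dprod_idem j *: p = p &
    forall k, Mk k p -> forall x, Mk k (dprod_idem j *: x).
Proof.
move=> Rj_av n Mk Mk_submod.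
have Mk'_submod k : is_submodule (fun y : component => Mk k (val y)).
  have [M0 Mlin] := Mk_submod k; split; first by rewrite raddf0.
  by move=> a u v Mu Mv; rewrite raddfD /=; apply: Mlin.
have [q q_point] := avoidance_point (Rj_av component) Mk'_submod.
exists (val q); first exact/eqP/(valP q).
move=> k Mkq x.
exact: (q_point k Mkq (exist (fun y => y \in component_pred) _ (component_idem_scale x))).
Qed.

End Component.

Section DirectSumSubmodule.
Variables (I : Type) (R : I -> comPzRingType) (M : lmodType (dprod R)).
Local Notation DS := (@dsum I R).

Lemma dsumD (r s : dprod R) : r \in DS -> s \in DS -> r + s \in DS.
Proof.
move=> DSr DSs; rewrite -[s]opprK -[- s]sub0r.
by apply: dsumB => //; apply: dsumB => //; exact: dsum0.
Qed.

(* This is the submodule [(+)_i R_i] M: a finite sum of products [r_l *: x_l]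
   is fixed by the indicator of the union of the supports of the [r_l]. *)
Definition dsum_submod : {pred M} :=
  fun x => `[< exists2 r, r \in DS & r *: x = x >].

Lemma dsum_submodP x :
  reflect (exists2 r, r \in DS & r *: x = x) (x \in dsum_submod).
Proof. by rewrite unfold_in; apply: asboolP. Qed.

Lemma dsum_submod_zmod_closed : zmod_closed dsum_submod.
Proof.
split=> [|x y /dsum_submodP[r DSr rx] /dsum_submodP[s DSs sy]].
  by apply/dsum_submodP; exists 0; [exact: dsum0 | rewrite scaler0].
apply/dsum_submodP; exists (r + s - r * s).
  by apply: dsumB; [apply: dsumD | apply: dsumM].
have rsx : (r * s) *: x = s *: x by rewrite mulrC -scalerA rx.
have rsy : (r * s) *: y = r *: y by rewrite -scalerA sy.
by rewrite scalerBr !scalerBl !scalerDl rsx rsy rx sy addrK addrAC subrr add0r.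
Qed.
HB.instance Definition _ :=
  GRing.isZmodClosed.Build M dsum_submod dsum_submod_zmod_closed.

Lemma dsum_submodZ a x : x \in dsum_submod -> a *: x \in dsum_submod.
Proof.
case/dsum_submodP=> r DSr rx; apply/dsum_submodP; exists r => //.
by rewrite scalerA mulrC -scalerA rx.
Qed.

Lemma dsum_submod_scale r x : r \in DS -> r *: x \in dsum_submod.
Proof.
move=> DSr; apply/dsum_submodP; exists (dprod_ind (fun i => r i != 0)).
  move: DSr; rewrite !unfold_in => /asboolP[m [f r_supp]]; apply/asboolP.
  by exists m, f => i /r_supp; rewrite /dprod_ind /= => ->; rewrite eqxx.
rewrite scalerA; congr (_ *: _); apply: dprodP => i; rewrite dprod_mulE /dprod_ind /=.
by case: eqP => [->|]; rewrite ?mul0r ?mul1r.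
Qed.

Lemma dsum_ind_scale_sub (S : M -> Prop) (C : I -> bool) : is_submodule S ->
  (forall j, C j -> forall x, S (dprod_idem j *: x)) ->
  forall r, r \in DS -> forall y, S ((dprod_ind C * r) *: y).
Proof.
move=> S_submod C_sub r; rewrite unfold_in => /asboolP[m [f r_supp]] y.
elim: m f r r_supp => [|m IHm] f r r_supp.
  have -> : r = 0 by apply: dprodP => i; apply: r_supp => -[].
  by rewrite mulr0 scale0r; exact: is_submodule0.
pose j := f ord0; rewrite -[r](addrNK (dprod_idem j * r)) mulrDr scalerDl.
apply: is_submoduleD => //; last first.
  rewrite mulrA dprod_ind_idem; case: ifP => Cj; first by rewrite -scalerA; exact: C_sub.
  by rewrite mul0r scale0r; exact: is_submodule0.
apply: (IHm (fun k => f (lift ord0 k))) => i i_out.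
rewrite dprod_addE dprod_oppE dprod_mulE.
have [<-|ji] := pselect (j = i); first by rewrite /dprod_idem dprod_inj_id mul1r subrr.
rewrite /dprod_idem dprod_inj_out // mul0r subr0; apply: r_supp => k.
by case: (unliftP ord0 k) => [k' ->|-> fj]; [exact: i_out | exact: ji].
Qed.

End DirectSumSubmodule.

Arguments dsum_submod {I R} M.

Section ProductAvoidance.
Variables (I : Type) (R : I -> comPzRingType).
Hypotheses (R_av : forall i, module_avoidance_ring (R i))
  (quot_av : module_avoidance_ring (rquot (dsum_ideal R))).
Variables (M : lmodType (dprod R)) (n : nat) (Mk : 'I_n -> M -> Prop).
Hypothesis Mk_submod : forall k, is_submodule (Mk k).

Definition component_cover j : {set 'I_n} :=
  [set k | `[< forall x, Mk k (dprod_idem j *: x) >]].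

Local Notation eT := (@fiber_idem I R _ component_cover).

Lemma component_coverP j k :
  reflect (forall x, Mk k (dprod_idem j *: x)) (k \in component_cover j).
Proof. by rewrite inE; apply: asboolP. Qed.

Lemma fiber_sub_of_addsub (T : {set 'I_n}) k y : k \in T ->
  addsub (Mk k) (dsum_submod M) (eT T *: y) -> Mk k (eT T *: y).
Proof.
move=> kT [m Mkm /dsum_submodP[r DSr rz]].
have -> : eT T *: y = eT T *: m + (eT T * r) *: (eT T *: y - m).
  by rewrite -scalerA rz scalerBr scalerA fiber_idemK addrC subrK.
apply: (is_submoduleD (Mk_submod k)); first exact: is_submoduleZ.
by apply: dsum_ind_scale_sub => // j /eqP jT; apply/component_coverP; rewrite jT.
Qed.

Lemma fiber_idem_eq0 (T : {set 'I_n}) : ~ (exists j, component_cover j = T) ->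
  eT T = 0.
Proof.
move=> no_j; apply: dprodP => i; rewrite /fiber_idem /dprod_ind /=.
by case: eqP => // iT; case: no_j; exists i.
Qed.

Lemma fiber_avoidance_point (T : {set 'I_n}) :
  exists q, eT T *: q = q /\ forall k, Mk k q -> forall y, Mk k (eT T *: y).
Proof.
have [[j jT]|no_j] := pselect (exists j, component_cover j = T); last first.
  rewrite fiber_idem_eq0 //; exists 0; rewrite scaler0; split=> // k _ y.
  by rewrite scale0r; exact: is_submodule0.
have [p ej_p p_point] := component_avoidance_point (@R_av j) Mk_submod.
pose Sk k y := addsub (Mk k) (dsum_submod M) (eT T *: y).
have Sk_submod k : is_submodule (Sk k).
  exact/is_submodule_scale_preim/is_submodule_addsub/Mk_submod/dsum_submodZ.
have Sk_N k x : x \in dsum_submod M -> Sk k x.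
  by exists 0; [exact: is_submodule0 | rewrite subr0 dsum_submodZ].
have [x x_point] := avoidance_point_quotmod (J := dsum_ideal R)
  (@dsum_submodZ _ _ M) (@dsum_submod_scale _ _ M) quot_av Sk_submod Sk_N.
have eT_ej : eT T * dprod_idem j = dprod_idem j by rewrite dprod_ind_idem jT eqxx.
exists ((eT T - dprod_idem j) *: x + p); split.
  by rewrite scalerDr scalerA mulrBr fiber_idemK eT_ej -{1}ej_p scalerA eT_ej ej_p.
move=> k Mk_q.
have ej_q : dprod_idem j *: ((eT T - dprod_idem j) *: x + p) = p.
  rewrite scalerDr scalerA mulrBr [_ * eT T]mulrC eT_ej dprod_idemK subrr.
  by rewrite scale0r add0r.
have Mk_p : Mk k p by rewrite -ej_q; exact: is_submoduleZ.
have kT : k \in T by rewrite -jT; apply/component_coverP/p_point.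
have Mk_eTx : Mk k (eT T *: x).
  have -> : eT T *: x = (eT T - dprod_idem j) *: x + p - p + dprod_idem j *: x.
    by rewrite addrK scalerBl subrK.
  apply: (is_submoduleD (Mk_submod k)); first exact: is_submoduleB.
  by apply/component_coverP; rewrite jT.
move=> y; apply: fiber_sub_of_addsub => //; apply: x_point.
by exists (eT T *: x); rewrite ?subrr ?rpred0.
Qed.

End ProductAvoidance.

Lemma dprod_module_avoidance (I : Type) (R : I -> comPzRingType) :
  (forall i, module_avoidance_ring (R i)) ->
  module_avoidance_ring (rquot (dsum_ideal R)) -> module_avoidance_ring (dprod R).
Proof.
move=> R_av quot_av M n Mk Mk_submod Mk_cover.
apply: (avoidance_of_idempotent_points _ _ Mk_submod Mk_cover
  (fiber_avoidance_point R_av quot_av Mk_submod)).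
  exact: sum_fiber_idem.
exact: fiber_idem_orth.
Qed.

Theorem corollary3p22 (I : Type) (R : I -> comNzRingType)
  (hR : forall i, module_avoidance_ring (R i)) :
  module_avoidance_ring (dprod (fun i => (R i : comPzRingType))) <->
  module_avoidance_ring (rquot (dsum_ideal (fun i => (R i : comPzRingType)))).
Proof.
split; first exact: (module_avoidance_ring_rmorph (rquot_pi _)).
exact: dprod_module_avoidance.
Qed.
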